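(* Let $A\in\mathbb{R}^{m\times n}$, $b\in\mathbb{R}^m$, and let $g:\mathbb{R}^m\to\mathbb{R}$ be $\mu_g$-strongly convex. Let $h(z):=g(z)-b^\top z$ and let $\hat z$ be the unique solution of $\min_{z}h(z)$ s.t. $A^\top z=0$. Let $\tilde z^*_k\in\mathbb{R}^m$, $z_k:=\nabla h^*(\tilde z^*_k)$, let $\mathcal{J}\subseteq[n]$ with $A_{:,\mathcal{J}}\ne 0$, $r:=(A_{:,\mathcal{J}})^\top z_k$, and for $\delta_z>0$ set $$\tilde z^*_{k+1}:=\tilde z^*_k-\delta_z\frac{\|r\|_2^2}{\|A_{:,\mathcal{J}}r\|_2^2}A_{:,\mathcal{J}}r,\qquad z_{k+1}:=\nabla h^*(\tilde z^*_{k+1})$$ (with $\tilde z^*_{k+1}:=\tilde z^*_k$ if $r=0$). Then $$D_h^{\tilde z^*_{k+1}}(z_{k+1},\hat z)\le D_h^{\tilde z^*_k}(z_k,\hat z)-\frac{\delta_z(2\mu_g-\delta_z)}{2\mu_g}\frac{\|r\|_2^4}{\|A_{:,\mathcal{J}}r\|_2^2}\le D_h^{\tilde z^*_k}(z_k,\hat z)-\frac{\delta_z(2\mu_g-\delta_z)}{2\mu_g}\frac{\|r\|_2^2}{\sigma_{\max}^2(A_{:,\mathcal{J}})},$$ where the middle term is interpreted as $0$ if $r=0$, and the second inequality is asserted for $0<\delta_z\le 2\mu_g$.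
   Context: $h^*$ denotes the Fenchel conjugate $h^*(u)=\sup_z\{\langle u,z\rangle-h(z)\}$, which is differentiable with $1/\mu_g$-Lipschitz gradient. The Bregman distance with respect to a convex function $h$ and $u\in\partial h(z)$ is $D_h^{u}(z,y):=h(y)-h(z)-\langle u,y-z\rangle=h^*(u)-\langle u,y\rangle+h(y)$ (note $\tilde z^*_k\in\partial h(z_k)$). $\sigma_{\max}(\cdot)$ is the largest singular value; $A_{:,\mathcal{J}}$ is the column submatrix indexed by $\mathcal{J}$. *)

From HB Require Import structures.
From mathcomp Require Import all_boot all_order all_algebra.
From mathcomp Require Import all_classical all_reals all_analysis.
Set Implicit Arguments. Unset Strict Implicit. Unset Printing Implicit Defensive.
Import Order.TTheory GRing.Theory Num.Theory.
Import numFieldNormedType.Exports.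
Local Open Scope ring_scope.
Local Open Scope classical_set_scope.

Section Defs.
Variable R : realType.

Definition dotv (m : nat) (u v : 'cV[R]_m) : R := \sum_i u i 0 * v i 0.
Definition norm2 (m : nat) (v : 'cV[R]_m) : R := dotv v v.

Definition strongly_convex (m : nat) (mu : R) (g : 'cV[R]_m -> R) : Prop :=
  0 < mu /\
  forall (x y : 'cV[R]_m) (t : R), 0 <= t -> t <= 1 ->
    g ((1 - t) *: x + t *: y) <=
      (1 - t) * g x + t * g y - mu / 2 * (t * (1 - t)) * norm2 (x - y).

Definition hfun (m : nat) (g : 'cV[R]_m -> R) (b : 'cV[R]_m) (z : 'cV[R]_m) : R :=
  g z - dotv b z.

Definition fconj (m : nat) (h : 'cV[R]_m -> R) (u : 'cV[R]_m) : R :=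
  sup [set dotv u z - h z | z in [set: 'cV[R]_m]].

Definition is_gradient (m : nat) (f : 'cV[R]_m -> R) (u z : 'cV[R]_m) : Prop :=
  differentiable f u /\ forall v : 'cV[R]_m, 'd f u v = dotv z v.

Definition bregman (m : nat) (h : 'cV[R]_m -> R) (u z y : 'cV[R]_m) : R :=
  h y - h z - dotv u (y - z).

(* column submatrix A_{:,J} (columns of J in increasing order) *)
Definition colJ (m n : nat) (A : 'M[R]_(m, n)) (J : {set 'I_n}) : 'M[R]_(m, #|J|) :=
  colsub (fun j : 'I_#|J| => enum_val j) A.

Definition sigma_max (m p : nat) (M : 'M[R]_(m, p)) : R :=
  sup [set Num.sqrt (norm2 (M *m v)) | v in [set v : 'cV[R]_p | norm2 v = 1]].

Definition resid (m n : nat) (A : 'M[R]_(m, n)) (J : {set 'I_n}) (z : 'cV[R]_m)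
  : 'cV[R]_#|J| := (colJ A J)^T *m z.

Definition kstep (m n : nat) (A : 'M[R]_(m, n)) (J : {set 'I_n}) (z : 'cV[R]_m)
  (delta : R) (u : 'cV[R]_m) : 'cV[R]_m :=
  let r := resid A J z in
  if r == 0 then u
  else u - (delta * (norm2 r / norm2 (colJ A J *m r))) *: (colJ A J *m r).

Definition midterm (m n : nat) (A : 'M[R]_(m, n)) (J : {set 'I_n}) (z : 'cV[R]_m) : R :=
  let r := resid A J z in
  if r == 0 then 0 else norm2 r ^+ 2 / norm2 (colJ A J *m r).

End Defs.

From HB Require Import structures.
From mathcomp Require Import all_boot all_order all_algebra.
From mathcomp Require Import all_classical all_reals all_analysis.
From mathcomp Require Import ring lra.
Import Order.TTheory GRing.Theory Num.Theory.
Import numFieldNormedType.Exports.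
Local Open Scope ring_scope.
Set Implicit Arguments.
Unset Strict Implicit.

(* Since h is mu-strongly convex, its conjugate h^* is finite and the gradient
   z = grad h^*(u) maximizes <u, .> - h, so that D_h^u(z, zhat) equals
   h(zhat) - <u, zhat> + h^*(u).  Strong convexity also gives the descent
   inequality h^*(u + d) <= h^*(u) + <d, z> + |d|^2 / (2 mu).  The step moves u
   by a multiple of A_J r, which is orthogonal to zhat because A^T zhat = 0 and
   satisfies <A_J r, z_k> = |r|^2; plugging it into the descent inequality gives
   the first estimate exactly, and |A_J r|^2 <= sigma_max^2 |r|^2 the second.
   Identifying the gradient with the maximizer uses that a finite convex function
   is bounded above on boxes, hence lower semicontinuous, while differentiability
   of h^* forces near-maximizers close to z. *)

Section Euclidean.
Variables (R : realType) (m : nat).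
Implicit Types (u v w : 'cV[R]_m) (a : R).

Lemma dotvC u v : dotv u v = dotv v u.
Proof. by apply: eq_bigr => i _; rewrite mulrC. Qed.

Lemma dotvDl u v w : dotv (u + v) w = dotv u w + dotv v w.
Proof. by rewrite /dotv -big_split; apply: eq_bigr => i _; rewrite mxE mulrDl. Qed.

Lemma dotvZl a u w : dotv (a *: u) w = a * dotv u w.
Proof. by rewrite /dotv mulr_sumr; apply: eq_bigr => i _; rewrite mxE mulrA. Qed.

Lemma dotvNl u w : dotv (- u) w = - dotv u w.
Proof. by rewrite -scaleN1r dotvZl mulN1r. Qed.

Lemma dotvBl u v w : dotv (u - v) w = dotv u w - dotv v w.
Proof. by rewrite dotvDl dotvNl. Qed.

Lemma dotv0l w : dotv 0 w = 0.
Proof. by rewrite -(scale0r 0) dotvZl mul0r. Qed.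

Lemma dotvDr u v w : dotv w (u + v) = dotv w u + dotv w v.
Proof. by rewrite dotvC dotvDl !(dotvC w). Qed.

Lemma dotvZr a u w : dotv w (a *: u) = a * dotv w u.
Proof. by rewrite dotvC dotvZl dotvC. Qed.

Lemma dotvNr u w : dotv w (- u) = - dotv w u.
Proof. by rewrite dotvC dotvNl dotvC. Qed.

Lemma dotvBr u v w : dotv w (u - v) = dotv w u - dotv w v.
Proof. by rewrite dotvDr dotvNr. Qed.

Lemma dotv_delta i w : dotv (delta_mx i 0) w = w i 0.
Proof.
rewrite /dotv (bigD1 i) //= big1 ?addr0 => [|j /negbTE ji]; rewrite mxE.
  by rewrite !eqxx mul1r.
by rewrite ji mul0r.
Qed.

Lemma norm2_ge0 v : 0 <= norm2 v.
Proof. by apply: sumr_ge0 => i _; rewrite -expr2 sqr_ge0. Qed.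

Lemma norm2_eq0 v : (norm2 v == 0) = (v == 0).
Proof.
apply/idP/eqP => [|->]; last by rewrite /norm2 dotv0l.
rewrite /norm2 /dotv psumr_eq0 => [/allP v0|i _]; last by rewrite -expr2 sqr_ge0.
apply/matrixP => i j; rewrite ord1 mxE.
by have := v0 i (mem_index_enum _); rewrite -expr2 sqrf_eq0 => /eqP.
Qed.

Lemma norm2_gt0 v : (0 < norm2 v) = (v != 0).
Proof. by rewrite lt_neqAle norm2_ge0 andbT eq_sym norm2_eq0. Qed.

Lemma norm2Z a v : norm2 (a *: v) = a ^+ 2 * norm2 v.
Proof. by rewrite /norm2 dotvZl dotvZr mulrA -expr2. Qed.

Lemma norm2N v : norm2 (- v) = norm2 v.
Proof. by rewrite /norm2 dotvNl dotvNr opprK. Qed.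

Lemma norm2B u v : norm2 (u - v) = norm2 u - 2 * dotv u v + norm2 v.
Proof. by rewrite /norm2 dotvBl !dotvBr (dotvC v u); ring. Qed.

Lemma coord_le_sqrt_norm2 v i : `|v i 0| <= Num.sqrt (norm2 v).
Proof.
rewrite -sqrtr_sqr ler_wsqrtr // /norm2 /dotv (bigD1 i) //= -expr2 lerDl.
by apply: sumr_ge0 => j _; rewrite -expr2 sqr_ge0.
Qed.

Lemma dotv_le_young (mu : R) u v : 0 < mu ->
  dotv u v - mu / 2 * norm2 v <= norm2 u / (2 * mu).
Proof.
move=> mu_gt0; have := norm2_ge0 (u - mu *: v).
rewrite norm2B norm2Z dotvZr ler_pdivlMr; last by lra.
by nra.
Qed.

End Euclidean.

Lemma dotv_mulmx (R : realType) m p (M : 'M[R]_(m, p)) u v :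
  dotv u (M *m v) = dotv (M^T *m u) v.
Proof.
rewrite /dotv.
under eq_bigr do rewrite mxE big_distrr.
under [RHS]eq_bigr do rewrite mxE big_distrl.
rewrite exchange_big /=; apply: eq_bigr => j _; apply: eq_bigr => i _.
by rewrite !mxE mulrCA mulrA.
Qed.

Section Convexity.
Variables (R : realType) (m : nat).
Implicit Types (f : 'cV[R]_m -> R) (x y z : 'cV[R]_m).

Definition convex_fun f := forall x y (t : R), 0 <= t -> t <= 1 ->
  f ((1 - t) *: x + t *: y) <= (1 - t) * f x + t * f y.

Lemma strongly_convex_convex mu f : strongly_convex mu f -> convex_fun f.
Proof.
move=> [mu_gt0 scf] x y t t0 t1; have := scf x y t t0 t1.
have : 0 <= mu / 2 * (t * (1 - t)) * norm2 (x - y).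
  by rewrite !mulr_ge0 ?norm2_ge0 ?subr_ge0 ?divr_ge0 ?(ltW mu_gt0).
lra.
Qed.

Lemma strongly_convex_sub_dotv mu f c :
  strongly_convex mu f -> strongly_convex mu (fun z => f z - dotv c z).
Proof.
move=> [mu_gt0 scf]; split=> // x y t t0 t1.
rewrite dotvDr !dotvZr; have := scf x y t t0 t1; lra.
Qed.

Lemma convex_fun_translate f z : convex_fun f -> convex_fun (fun x => f (z + x)).
Proof.
move=> cvx x y t t0 t1.
have -> : z + ((1 - t) *: x + t *: y) = (1 - t) *: (z + x) + t *: (z + y).
  by apply/matrixP => i j; rewrite !mxE; ring.
exact: cvx.
Qed.

Lemma convex_le_max f x y t : convex_fun f -> 0 <= t -> t <= 1 ->
  f ((1 - t) *: x + t *: y) <= Num.max (f x) (f y).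
Proof.
move=> cvx t0 t1; apply: le_trans (cvx x y t t0 t1) _.
have fxM : f x <= Num.max (f x) (f y) by rewrite le_max lexx.
have fyM : f y <= Num.max (f x) (f y) by rewrite le_max lexx orbT.
nra.
Qed.

Lemma convex_segment_ub f x (rho s : R) : convex_fun f -> 0 < rho -> `|s| <= rho ->
  f (s *: x) <= Num.max (f ((- rho) *: x)) (f (rho *: x)).
Proof.
move=> cvx rho_gt0; rewrite ler_norml => /andP[srho srho'].
set t := (s + rho) / (2 * rho).
have -> : s *: x = (1 - t) *: ((- rho) *: x) + t *: (rho *: x).
  by rewrite !scalerA -scalerDl /t; congr (_ *: _); field; lra.
apply: convex_le_max => //; rewrite /t.
  by rewrite divr_ge0 //; lra.
by rewrite ler_pdivrMr; lra.
Qed.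

(* Induction on the number [k] of coordinates allowed to be nonzero: a vector of
   the box is the midpoint of a vector with one coordinate fewer (in the doubled
   box) and a point on a coordinate axis. *)
Lemma convex_box_ub_prefix f k : convex_fun f -> forall rho : R, 0 < rho ->
  exists M : R, forall x, (forall i, `|x i 0| <= rho) ->
    (forall i : 'I_m, (k <= i)%N -> x i 0 = 0) -> f x <= M.
Proof.
move=> cvx; elim: k => [|k IHk] rho rho_gt0.
  exists (f 0) => x _ x0; suff -> : x = 0 by [].
  by apply/matrixP => i j; rewrite ord1 mxE x0.
have [km|mk] := ltnP k m; last first.
  have [M ubM] := IHk rho rho_gt0; exists M => x xb x0; apply: ubM => // i ki.
  by move: (ltn_ord i); rewrite ltnNge (leq_trans mk ki).
pose ik := Ordinal km; pose e : 'cV[R]_m := \col_i (i == ik)%:R.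
have rho2_gt0 : 0 < 2 * rho by lra.
have [M ubM] := IHk _ rho2_gt0.
exists ((M + Num.max (f ((- (2 * rho)) *: e)) (f ((2 * rho) *: e))) / 2).
move=> x xb x0; pose x' : 'cV[R]_m := \col_i (if i == ik then 0 else 2 * x i 0).
have -> : x = (1 - 2^-1) *: x' + 2^-1 *: ((2 * x ik 0) *: e).
  by apply/matrixP => i j; rewrite ord1 !mxE; case: eqP => [->|_] /=; field.
have ub_x' : f x' <= M.
  apply: ubM => i; rewrite mxE; case: eqP => [_|ne].
  - by rewrite normr0 (ltW rho2_gt0).
  - by rewrite normrM ger0_norm //; have := xb i; lra.
  - by [].
  - move=> ki; rewrite x0 ?mulr0 // ltn_neqAle ki andbT.
    by apply/eqP => ki_eq; apply: ne; apply: val_inj; rewrite /= -ki_eq.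
have ub_e : f ((2 * x ik 0) *: e) <= Num.max (f ((- (2 * rho)) *: e)) (f ((2 * rho) *: e)).
  by apply: convex_segment_ub; rewrite // normrM ger0_norm //; have := xb ik; lra.
by apply: le_trans (cvx _ _ _ _ _) _; lra.
Qed.

Lemma convex_box_ub f (rho : R) : convex_fun f -> 0 < rho ->
  exists M : R, forall x, (forall i, `|x i 0| <= rho) -> f x <= M.
Proof.
move=> cvx rho_gt0; have [M ubM] := convex_box_ub_prefix m cvx rho_gt0.
by exists M => x xb; apply: ubM => // i; rewrite leqNgt ltn_ord.
Qed.

Lemma convex_box_lb f : convex_fun f ->
  exists L : R, forall x, (forall i, `|x i 0| <= 1) -> L <= f x.
Proof.
move=> cvx; have [M ubM] := convex_box_ub cvx ltr01.
exists (2 * f 0 - M) => x xb.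
have half_ge0 : (0 : R) <= 2^-1 by lra.
have half_le1 : (2^-1 : R) <= 1 by lra.
have := cvx x (- x) _ half_ge0 half_le1.
have -> : (1 - 2^-1) *: x + 2^-1 *: - x = 0.
  by apply/matrixP => i j; rewrite !mxE; field.
have : f (- x) <= M by apply: ubM => i; rewrite mxE normrN.
lra.
Qed.

Lemma strongly_convex_bounded_below mu f : strongly_convex mu f ->
  exists L : R, forall x, L <= f x.
Proof.
move=> scf; have [mu_gt0 scf'] := scf.
have [L1 lbL1] := convex_box_lb (strongly_convex_convex scf).
set c := mu / 2 + f 0 - L1.
exists (Num.min L1 (f 0 - c ^+ 2 / (2 * mu))) => x.
set s := Num.sqrt (norm2 x).
have [s_le1|s_gt1] := lerP s 1.
  rewrite ge_min lbL1 // => i.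
  exact: le_trans (coord_le_sqrt_norm2 x i) s_le1.
(* Outside the unit box, strong convexity on the segment [0, x] through x / s
   makes f grow quadratically in s. *)
rewrite ge_min; apply/orP; right.
have s_gt0 : 0 < s by lra.
have ss : s ^+ 2 = norm2 x by rewrite sqr_sqrtr ?norm2_ge0.
have sV_ge0 : 0 <= s^-1 by rewrite invr_ge0 (ltW s_gt0).
have sV_le1 : s^-1 <= 1 by rewrite invf_le1 // (ltW s_gt1).
have := scf' 0 x s^-1 sV_ge0 sV_le1.
rewrite scaler0 add0r sub0r norm2N -ss => sc_ineq.
have lb_xs : L1 <= f (s^-1 *: x).
  apply: lbL1 => i; rewrite mxE normrM ger0_norm // mulrC ler_pdivrMr // mul1r.
  exact: coord_le_sqrt_norm2.
have key : s * L1 <= (s - 1) * f 0 + f x - mu / 2 * (s - 1) * s.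
  have -> : (s - 1) * f 0 + f x - mu / 2 * (s - 1) * s
      = s * ((1 - s^-1) * f 0 + s^-1 * f x - mu / 2 * (s^-1 * (1 - s^-1)) * s ^+ 2).
    by field; rewrite lt0r_neq0.
  by rewrite ler_pM2l //; apply: le_trans lb_xs sc_ineq.
have sq_ge0 : 0 <= (mu * s - c) ^+ 2 / (2 * mu) by rewrite divr_ge0 ?sqr_ge0 //; lra.
have -> : f 0 - c ^+ 2 / (2 * mu)
    = s * L1 - (s - 1) * f 0 + mu / 2 * (s - 1) * s - (mu * s - c) ^+ 2 / (2 * mu).
  by rewrite /c; field; rewrite lt0r_neq0.
lra.
Qed.

Lemma convex_lower_bound_near f z : convex_fun f ->
  exists2 C : R, 0 <= C & forall (tau : R) y, 0 < tau -> tau <= 1 ->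
    (forall i, `|y i 0 - z i 0| <= tau) -> f z <= f y + tau * C.
Proof.
move=> cvx; have [M ubM] := convex_box_ub (convex_fun_translate z cvx) ltr01.
have fzM : f z <= M by rewrite -[z]addr0; apply: ubM => i; rewrite mxE normr0.
exists (M - f z); first by rewrite subr_ge0.
move=> tau y tau_gt0 tau_le1 yz.
(* [z] is the midpoint of [y] and its reflection, where [f] is nearly [f z]. *)
have ub_near : f (z + (z - y)) <= f z + tau * (M - f z).
  have -> : z + (z - y) = (1 - tau) *: z + tau *: (z + tau^-1 *: (z - y)).
    by apply/matrixP => i j; rewrite !mxE; field; rewrite lt0r_neq0.
  apply: le_trans (cvx _ _ _ (ltW tau_gt0) tau_le1) _.
  have : f (z + tau^-1 *: (z - y)) <= M.
    apply: ubM => i; rewrite !mxE normrM ger0_norm ?invr_ge0 ?(ltW tau_gt0) //.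
    by rewrite mulrC ler_pdivrMr // mul1r distrC.
  nra.
have half_ge0 : (0 : R) <= 2^-1 by lra.
have half_le1 : (2^-1 : R) <= 1 by lra.
have := cvx y (z + (z - y)) _ half_ge0 half_le1.
have -> : (1 - 2^-1) *: y + 2^-1 *: (z + (z - y)) = z.
  by apply/matrixP => i j; rewrite !mxE; field.
lra.
Qed.

Lemma strongly_convex_min_growth mu f z : strongly_convex mu f ->
  (forall y, f z <= f y) -> forall y, f z + mu / 2 * norm2 (y - z) <= f y.
Proof.
move=> [mu_gt0 scf] zmin y; set N := norm2 (y - z).
have N_ge0 : 0 <= N := norm2_ge0 _.
have growth t : 0 < t -> t <= 1 -> f z + mu / 2 * (1 - t) * N <= f y.
  move=> t_gt0 t_le1; have := scf z y t (ltW t_gt0) t_le1.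
  rewrite -norm2N opprB -/N; have := zmin ((1 - t) *: z + t *: y) => A B.
  have : t * (f z + mu / 2 * (1 - t) * N) <= t * f y by lra.
  by rewrite ler_pM2l.
apply/ler_addgt0Pr => e e_gt0; set C := mu / 2 * N.
have C_ge0 : 0 <= C by rewrite /C mulr_ge0 //; lra.
set t := Num.min 1 (e / (C + 1)).
have t_gt0 : 0 < t by rewrite lt_min ltr01 divr_gt0 //; lra.
have t_le1 : t <= 1 by rewrite ge_min lexx.
have tC_le : t * C <= e.
  have t_le : t <= e / (C + 1) by rewrite ge_min lexx orbT.
  apply: le_trans (ler_wpM2r C_ge0 t_le) _.
  by rewrite mulrAC ler_pdivrMr; nra.
have := growth t t_gt0 t_le1; rewrite /C in tC_le *; lra.
Qed.

End Convexity.

Lemma norm_delta_mx_le1 (R : realType) m (i : 'I_m) : `|(delta_mx i 0 : 'cV[R]_m)| <= 1.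
Proof.
change (mx_norm (delta_mx i 0 : 'cV[R]_m) <= 1); rewrite mx_normrE.
apply: bigmax_le => // -[j k] _ /=.
by rewrite mxE; case: (_ && _); rewrite ?normr1 ?normr0.
Qed.

Lemma gradient_linear_approx (R : realType) m (F : 'cV[R]_m -> R) u z :
  is_gradient F u z -> forall eta : R, 0 < eta -> exists2 del : R, 0 < del &
    forall d, `|d| < del -> `|F (u + d) - F u - dotv z d| <= eta * `|d|.
Proof.
move=> [dF dFz] eta eta_gt0.
have /eqaddoP /(_ eta eta_gt0) /nbhs_norm0P [del del_gt0 small] := diff_locally dF.
exists del => // d d_lt; rewrite -dFz (addrC u) -addrA -opprD.
exact: small d d_lt.
Qed.

Section FenchelConjugate.
Variables (R : realType) (m : nat) (h : 'cV[R]_m -> R) (mu : R).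
Hypothesis sc_h : strongly_convex mu h.
Implicit Types (u w z : 'cV[R]_m).
Local Open Scope classical_set_scope.

Let mu_gt0 : 0 < mu. Proof. by case: sc_h. Qed.

Lemma fconj_has_ubound u : has_ubound [set dotv u z - h z | z in [set: 'cV[R]_m]].
Proof.
have [L lbL] := strongly_convex_bounded_below (strongly_convex_sub_dotv u sc_h).
by exists (- L) => _ [z _ <-]; have /= := lbL z; lra.
Qed.

Lemma le_fconj u w : dotv u w - h w <= fconj h u.
Proof. by apply: ub_le_sup; [exact: fconj_has_ubound | exists w]. Qed.

Lemma fconj_adherent u (e : R) : 0 < e -> exists w, fconj h u - e < dotv u w - h w.
Proof.
move=> e_gt0.
have ne : [set dotv u z - h z | z in [set: 'cV[R]_m]] !=set0.
  by exists (dotv u 0 - h 0); exists 0.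
by have [_ [w _ <-] ?] := sup_adherent e_gt0 (conj ne (fconj_has_ubound u)); exists w.
Qed.

Lemma fconj_le u (B : R) : (forall w, dotv u w - h w <= B) -> fconj h u <= B.
Proof.
move=> ubB; apply: ge_sup => [|_ [w _ <-]]; last exact: ubB.
by exists (dotv u 0 - h 0); exists 0.
Qed.

Lemma fconj_quadratic_growth u z : dotv u z - h z = fconj h u ->
  forall w, dotv u w - h w <= fconj h u - mu / 2 * norm2 (w - z).
Proof.
move=> zmax w.
have zmin y : h z - dotv u z <= h y - dotv u y by have := le_fconj u y; lra.
by have /= := strongly_convex_min_growth (strongly_convex_sub_dotv u sc_h) zmin w; lra.
Qed.

Lemma fconj_smooth u z d : dotv u z - h z = fconj h u ->
  fconj h (u + d) <= fconj h u + dotv d z + norm2 d / (2 * mu).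
Proof.
move=> zmax; apply: fconj_le => w; rewrite dotvDl.
have := fconj_quadratic_growth zmax w; have := dotv_le_young d (w - z) mu_gt0.
by rewrite dotvBr; lra.
Qed.

Lemma fconj_near_maximizer_close u z : is_gradient (fconj h) u z ->
  forall tau : R, 0 < tau -> exists2 eps : R, 0 < eps & forall w,
    fconj h u - eps < dotv u w - h w -> forall i, `|w i 0 - z i 0| <= tau.
Proof.
move=> grad tau tau_gt0.
have [del del_gt0 approx] := gradient_linear_approx grad (divr_gt0 tau_gt0 (ltr0n _ 2)).
set s := del / 2; have s_gt0 : 0 < s by rewrite divr_gt0.
exists (tau * s / 2) => [|w wmax i]; first by rewrite !divr_gt0 ?mulr_gt0.
(* Probe [fconj h] along the i-th axis: near [u] it grows like [sg * z_i] by
   differentiability, and at least like [sg * w_i] by the choice of [w]. *)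
have probe sg : `|sg| <= s -> sg * (w i 0 - z i 0) < tau * s.
  move=> sg_le; set d : 'cV[R]_m := sg *: delta_mx i 0.
  have d_le : `|d| <= s.
    by rewrite normrZ; apply: le_trans sg_le; rewrite ler_piMr ?norm_delta_mx_le1.
  have d_lt : `|d| < del by apply: le_lt_trans d_le _; rewrite /s; lra.
  have := approx d d_lt; have := le_fconj (u + d) w.
  rewrite dotvDl /d dotvZl dotvZr dotv_delta (dotvC z) dotv_delta => lb ub.
  have := ler_norm (fconj h (u + sg *: delta_mx i 0) - fconj h u - sg * z i 0).
  have : tau / 2 * `|d| <= tau / 2 * s by rewrite ler_wpM2l // divr_ge0 ?(ltW tau_gt0).
  by rewrite /d; lra.
have := probe s; have := probe (- s); rewrite normrN ger0_norm ?(ltW s_gt0) //.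
move=> /(_ (lexx _)) pn /(_ (lexx _)) ps.
rewrite mulNr -mulrN (mulrC tau) ltr_pM2l // in pn.
rewrite (mulrC tau) ltr_pM2l // in ps.
by rewrite ler_norml; apply/andP; split; lra.
Qed.

(* Near-maximizers of [fun w => dotv u w - h w] are forced close to [z], where
   [h] is lower semicontinuous by convexity. *)
Lemma fconj_gradient_maximizer u z : is_gradient (fconj h) u z ->
  dotv u z - h z = fconj h u.
Proof.
move=> grad; apply/eqP; rewrite eq_le le_fconj /=; apply/ler_addgt0Pr => e e_gt0.
have [C C_ge0 lsc] := convex_lower_bound_near z (strongly_convex_convex sc_h).
set U := \sum_i `|u i 0|.
have U_ge0 : 0 <= U by apply: sumr_ge0.
have e2_gt0 : 0 < e / 2 by rewrite divr_gt0.
set tau := Num.min 1 (e / 2 / (C + U + 1)).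
have tau_gt0 : 0 < tau by rewrite lt_min ltr01 divr_gt0 //; lra.
have tau_le1 : tau <= 1 by rewrite ge_min lexx.
have tauCU : tau * (C + U) <= e / 2.
  have : tau * (C + U + 1) <= e / 2.
    by rewrite -ler_pdivlMr ?ge_min ?lexx ?orbT //; lra.
  lra.
have [eps eps_gt0 close] := fconj_near_maximizer_close grad tau_gt0.
have min_gt0 : 0 < Num.min eps (e / 2) by rewrite lt_min eps_gt0.
have [w wmax] := fconj_adherent u min_gt0.
have wz : forall i, `|w i 0 - z i 0| <= tau.
  by apply: close; apply: le_lt_trans wmax; rewrite lerD2l lerN2 ge_min lexx.
have dot_close : dotv u w - dotv u z <= tau * U.
  rewrite -dotvBr /dotv /U mulr_sumr; apply: ler_sum => i _.
  rewrite !mxE; apply: le_trans (ler_norm _) _; rewrite normrM mulrC.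
  exact: ler_wpM2r.
have := lsc tau w tau_gt0 tau_le1 wz.
have : fconj h u - e / 2 < dotv u w - h w.
  by apply: le_lt_trans wmax; rewrite lerD2l lerN2 ge_min lexx orbT.
lra.
Qed.

End FenchelConjugate.

Lemma bregman_fconjE (R : realType) m (h : 'cV[R]_m -> R) (u z y : 'cV[R]_m) :
  dotv u z - h z = fconj h u -> bregman h u z y = h y - dotv u y + fconj h u.
Proof. by move=> zmax; rewrite /bregman dotvBr; lra. Qed.

Section SigmaMax.
Variables (R : realType) (m p : nat) (M : 'M[R]_(m, p)).
Implicit Types v : 'cV[R]_p.

Lemma sigma_max_has_ubound :
  has_ubound [set Num.sqrt (norm2 (M *m v)) | v in [set v | norm2 v = 1]]%classic.
Proof.
exists (Num.sqrt (\sum_i (\sum_j `|M i j|) ^+ 2)) => _ [v /= v1 <-].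
apply: ler_wsqrtr; apply: ler_sum => i _.
have Mv_le : `|(M *m v) i 0| <= \sum_j `|M i j|.
  rewrite mxE; apply: le_trans (ler_norm_sum _ _ _) _; apply: ler_sum => j _.
  by rewrite normrM ler_piMr // -sqrtr1 -v1 coord_le_sqrt_norm2.
by apply: le_trans (ler_norm _) _; rewrite normrM expr2 ler_pM.
Qed.

Lemma norm2_mulmx_unit_le v : norm2 v = 1 -> norm2 (M *m v) <= sigma_max M ^+ 2.
Proof.
move=> v1; have sqrt_le : Num.sqrt (norm2 (M *m v)) <= sigma_max M.
  by apply: ub_le_sup; [exact: sigma_max_has_ubound | exists v].
rewrite -(sqr_sqrtr (norm2_ge0 (M *m v))) !expr2.
by apply: ler_pM; rewrite ?sqrtr_ge0.
Qed.

Lemma norm2_mulmx_le v : norm2 (M *m v) <= sigma_max M ^+ 2 * norm2 v.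
Proof.
have [->|v0] := eqVneq v 0; first by rewrite mulmx0 /norm2 !dotv0l mulr0.
set s := Num.sqrt (norm2 v); have s_gt0 : 0 < s by rewrite sqrtr_gt0 norm2_gt0.
have ss : s ^+ 2 = norm2 v by rewrite sqr_sqrtr ?norm2_ge0.
set w := s^-1 *: v.
have w1 : norm2 w = 1 by rewrite norm2Z exprVn ss mulVf // norm2_eq0.
have -> : v = s *: w by rewrite /w scalerA mulfV ?scale1r // lt0r_neq0.
clearbody w; rewrite -scalemxAr !norm2Z w1 mulr1 mulrC ler_pM2r ?exprn_gt0 //.
exact: norm2_mulmx_unit_le.
Qed.

End SigmaMax.

Section BlockStep.
Variables (R : realType) (m n : nat) (A : 'M[R]_(m, n)) (J : {set 'I_n}).
Implicit Types (u z : 'cV[R]_m).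

Lemma colJ_tr_mulmx_eq0 z : A^T *m z = 0 -> (colJ A J)^T *m z = 0.
Proof.
move=> Az0; rewrite /colJ trmx_mxsub mul_rowsub_mx Az0.
by apply/matrixP => i j; rewrite !mxE.
Qed.

Lemma dotv_colJ_resid z : dotv z (colJ A J *m resid A J z) = norm2 (resid A J z).
Proof. by rewrite dotv_mulmx. Qed.

Lemma norm2_colJ_resid_gt0 z : resid A J z != 0 -> 0 < norm2 (colJ A J *m resid A J z).
Proof.
move=> r0; rewrite norm2_gt0; apply: contraNneq r0 => Ar0.
by rewrite -norm2_eq0 -dotv_colJ_resid Ar0 dotvC dotv0l.
Qed.

Lemma resid_sigma_le_midterm z :
  norm2 (resid A J z) / sigma_max (colJ A J) ^+ 2 <= midterm A J z.
Proof.
rewrite /midterm /=; set r := resid A J z; case: eqP => [->|/eqP r0].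
  by rewrite /norm2 dotv0l mul0r.
have Ar_gt0 : 0 < norm2 (colJ A J *m r) := norm2_colJ_resid_gt0 r0.
have Ar_le := norm2_mulmx_le (colJ A J) r.
have r_gt0 : 0 < norm2 r by rewrite norm2_gt0.
have s_gt0 : 0 < sigma_max (colJ A J) ^+ 2 by nra.
rewrite ler_pdivrMr // mulrAC ler_pdivlMr // expr2 -mulrA ler_pM2l //.
by rewrite mulrC.
Qed.

Lemma bregman_kstep_le (h : 'cV[R]_m -> R) (mu delta : R) zhat u z u' z' :
  strongly_convex mu h -> (colJ A J)^T *m zhat = 0 ->
  is_gradient (fconj h) u z -> u' = kstep A J z delta u -> is_gradient (fconj h) u' z' ->
  bregman h u' z' zhat
    <= bregman h u z zhat - delta * (2 * mu - delta) / (2 * mu) * midterm A J z.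
Proof.
move=> sc_h AJzhat grad -> grad'; have [mu_gt0 _] := sc_h.
have zmax := fconj_gradient_maximizer sc_h grad.
rewrite !bregman_fconjE ?(fconj_gradient_maximizer sc_h grad') //.
rewrite /kstep /midterm /=; set r := resid A J z; case: eqP => [_|/eqP r0].
  by rewrite mulr0 subr0.
set v := colJ A J *m r; set c := delta * (norm2 r / norm2 v).
have v_gt0 : 0 < norm2 v := norm2_colJ_resid_gt0 r0.
have v_zhat : dotv (c *: v) zhat = 0.
  by rewrite dotvZl dotvC dotv_mulmx AJzhat dotv0l mulr0.
have := fconj_smooth sc_h (- (c *: v)) zmax.
rewrite dotvNl dotvZl (dotvC v) dotv_colJ_resid -/r norm2N norm2Z dotvBl v_zhat subr0.
have : c * norm2 r - c ^+ 2 * norm2 v / (2 * mu)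
    = delta * (2 * mu - delta) / (2 * mu) * (norm2 r ^+ 2 / norm2 v).
  by rewrite /c; field; rewrite !lt0r_neq0.
lra.
Qed.

End BlockStep.

Theorem mainTheorem3 (R : realType) (m n : nat) (A : 'M[R]_(m, n)) (b : 'cV[R]_m)
  (g : 'cV[R]_m -> R) (mu : R) (zhat uk zk uk1 zk1 : 'cV[R]_m)
  (J : {set 'I_n}) (delta : R) :
  strongly_convex mu g ->
  A^T *m zhat = 0 ->
  (forall z : 'cV[R]_m, A^T *m z = 0 -> hfun g b zhat <= hfun g b z) ->
  is_gradient (fconj (hfun g b)) uk zk ->
  colJ A J != 0 ->
  0 < delta ->
  uk1 = kstep A J zk delta uk ->
  is_gradient (fconj (hfun g b)) uk1 zk1 ->
  bregman (hfun g b) uk1 zk1 zhat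
    <= bregman (hfun g b) uk zk zhat
       - delta * (2 * mu - delta) / (2 * mu) * midterm A J zk
  /\ (delta <= 2 * mu ->
      bregman (hfun g b) uk zk zhat
       - delta * (2 * mu - delta) / (2 * mu) * midterm A J zk
      <= bregman (hfun g b) uk zk zhat
       - delta * (2 * mu - delta) / (2 * mu)
         * (norm2 (resid A J zk) / sigma_max (colJ A J) ^+ 2)).
Proof.
move=> sc_g Azhat _ grad_k _ delta_gt0 step grad_k1; have [mu_gt0 _] := sc_g.
split.
  exact: bregman_kstep_le (strongly_convex_sub_dotv b sc_g)
    (colJ_tr_mulmx_eq0 J Azhat) grad_k step grad_k1.
move=> delta_le; rewrite lerD2l lerN2; apply: ler_wpM2l.
  by apply: divr_ge0; [apply: mulr_ge0 |]; lra.
exact: resid_sigma_le_midterm.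
Qed.
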